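(* Let $n \ge 0$ and $0\le d\le m$ with $m \leq 2^{n+1}$. Then the Milnor primitive $Q_n$ acts trivially on $H^*(\operatorname{Gr}_d(\mathbb{R}^m);\mathbb{Z}/2)$.
   Context: $\operatorname{Gr}_d(\mathbb{R}^m)$ is the real Grassmannian of $d$-planes in $\mathbb{R}^m$. The Milnor primitives $Q_n$ in the mod 2 Steenrod algebra are defined by $Q_0 = Sq^1$ and $Q_n = [Q_{n-1}, Sq^{2^n}]$. *)

From HB Require Import structures.
From mathcomp Require Import all_boot all_order all_algebra.
From mathcomp Require Import mpoly.
Unset Strict Implicit. Unset Printing Implicit Defensive.
Import GRing.Theory.
Local Open Scope ring_scope.

(* Polynomial ring F_2[x_1, ..., x_d]: the mod 2 cohomology of (RP^oo)^d,
   x_i of degree 1.  H^*(BO(d);F_2) is the subring of symmetric polynomials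
   (w_k = k-th elementary symmetric polynomial). *)
Notation Pd d := {mpoly 'F_2[d]}.

(* Sq^k on a monomial x^a, via the Cartan formula and Sq(x_i) = x_i + x_i^2:
   Sq^k (x^a) = sum_{|b| = k} prod_i C(a_i, b_i) x^(a+b). *)
Definition SqMon (d k : nat) (a : 'X_{1..d}) : Pd d :=
  \sum_(b : 'X_{1..d < k.+1} | mdeg b == k)
     ((\prod_(i < d) 'C(a i, b i))%N)%:R *: 'X_[(a + b)%MM].

Definition Sq (d k : nat) (p : Pd d) : Pd d :=
  \sum_(a <- msupp p) p@_a *: SqMon d k a.

Fixpoint Qm (d n : nat) (p : Pd d) : Pd d :=
  match n with
  | 0 => Sq d 1 p
  | n'.+1 => Qm d n' (Sq d (2 ^ n) p) - Sq d (2 ^ n) (Qm d n' p)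
  end.

(* complete homogeneous symmetric polynomial h_j = dual Stiefel-Whitney
   class wbar_j (mod 2) of the tautological bundle. *)
Definition hcomp (d j : nat) : Pd d :=
  \sum_(b : 'X_{1..d < j.+1} | mdeg b == j) 'X_[(b : 'X_{1..d})].

(* H^*(Gr_d(R^m);F_2) = Sym_d / (wbar_j : m - d < j <= m).  A symmetric
   polynomial represents the zero class iff it lies in this ideal of Sym_d. *)
Definition in_Gr_ideal (d m : nat) (q : Pd d) : Prop :=
  exists c : nat -> Pd d, (forall j, c j \is symmetric) /\
    q = \sum_(j < m.+1 | (m - d < j)%N) c j * hcomp d j.

From HB Require Import structures.
From mathcomp Require Import all_boot all_order all_algebra.
From mathcomp Require Import mpoly perm.
From mathcomp Require Import zify ring.
Set Implicit Arguments. Unset Strict Implicit. Unset Printing Implicit Defensive.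
Import GRing.Theory.
Local Open Scope ring_scope.

(* Q_n acts on F_2[x_1, ..., x_d] as the derivation
   D_n = sum_i x_i^(2^(n+1)) d/dx_i.  For n = 0 this is the Cartan formula for
   Sq^1; the recursion Q_(n+1) = [Q_n, Sq^(2^(n+1))] then follows from the
   commutator identity [D_n, Sq^k] = D_(n+1) o Sq^(k - 2^(n+1)), checked on
   monomials one variable at a time.
   Since m <= 2^(n+1), write x_i^(2^(n+1)) = x_i^(2^(n+1) - m) x_i^m and expand
   x_i^m = sum_j e_(m-j)(x_k : k <> i) h_j (mod 2); the terms with j <= m - d
   vanish, as e_k of the d - 1 other variables is 0 for k >= d.  Hence
   Q_n p = sum_j D(g_j) p h_j over m - d < j <= m, with weights
   g_j(i) = x_i^(2^(n+1) - m) e_(m-j)(x_k : k <> i) that are permuted along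
   with the variables, so every coefficient D(g_j) p is symmetric when p is. *)

Section LinearExtension.
Variables (R : nzRingType) (n : nat) (V : lmodType R).
Implicit Types (F : 'X_{1..n} -> V) (p q : {mpoly R[n]}).

Definition mlin F p : V := \sum_(m <- msupp p) p@_m *: F m.

Lemma mlinE F p s : uniq s -> {subset msupp p <= s} ->
  mlin F p = \sum_(m <- s) p@_m *: F m.
Proof.
move=> s_uniq supp_s; rewrite /mlin [RHS](bigID (mem (msupp p))) /=.
rewrite [X in _ + X]big1 ?addr0 => [|m /memN_msupp_eq0 ->]; last by rewrite scale0r.
rewrite -(big_filter s (mem (msupp p))); apply/perm_big/uniq_perm.
- exact: msupp_uniq.
- by rewrite filter_uniq.
by move=> m; rewrite mem_filter; apply/esym/andb_idr; apply: supp_s.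
Qed.

Lemma mlinD F p q : mlin F (p + q) = mlin F p + mlin F q.
Proof.
pose s := undup (msupp p ++ msupp q).
have sub_s (r : {mpoly R[n]}) :
    {subset msupp r <= msupp p ++ msupp q} -> {subset msupp r <= s}.
  by move=> sub m /sub; rewrite mem_undup.
have s_p : {subset msupp p <= s} by apply: sub_s => m pm; rewrite mem_cat pm.
have s_q : {subset msupp q <= s} by apply: sub_s => m qm; rewrite mem_cat qm orbT.
have s_pq : {subset msupp (p + q) <= s} := sub_s _ (@msuppD_le _ _ p q).
rewrite (mlinE F _ s_pq) ?(mlinE F _ s_p) ?(mlinE F _ s_q) ?undup_uniq //.
by rewrite -big_split; apply: eq_bigr => m _; rewrite mcoeffD scalerDl.
Qed.

Lemma mlinZ F c p : mlin F (c *: p) = c *: mlin F p.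
Proof.
rewrite (@mlinE F _ (msupp p)) ?msupp_uniq //; last exact: msuppZ_le.
by rewrite scaler_sumr; apply: eq_bigr => m _; rewrite mcoeffZ scalerA.
Qed.

Lemma mlinX F m : mlin F 'X_[m] = F m.
Proof. by rewrite /mlin msuppX big_seq1 mcoeffX eqxx scale1r. Qed.

Lemma mlin_is_linear F : linear (mlin F).
Proof. by move=> c p q; rewrite mlinD mlinZ. Qed.

HB.instance Definition _ F :=
  GRing.isLinear.Build R {mpoly R[n]} V _ (mlin F) (mlin_is_linear F).

End LinearExtension.

Lemma mpoly_mulX_ind (R : comNzRingType) n (P : {mpoly R[n]} -> Prop) :
  (forall p q, P p -> P q -> P (p + q)) ->
  (forall c p, P p -> P (c *: p)) ->
  P 1 ->
  (forall p i, P p -> P (p * 'X_i)) ->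
  forall p, P p.
Proof.
move=> PD PZ P1 PX.
have PXn p i k : P p -> P ('X_i ^+ k * p).
  by elim: k => [|k IHk] Pp; rewrite ?mul1r // exprSr mulrAC; apply/PX/IHk.
have PXm m : P 'X_[m].
  by rewrite mpolyXE_id; apply: big_rec => // i q _; apply: PXn.
elim/mpolyind=> [|c m p _ _ Pp]; first by rewrite -(scale0r 1); apply: PZ.
exact/PD/Pp/PZ.
Qed.

Section MonomialCoefficients.
Variables (R : nzRingType) (n : nat).
Implicit Types (q : {mpoly R[n]}) (m c : 'X_{1..n}).

Lemma mcoeffMXE q m c :
  (q * 'X_[m])@_c = if (m <= c)%MM then q@_(c - m) else 0.
Proof.
case: ifP => [le_mc|nle_mc]; first by rewrite -{1}(submK le_mc) addmC mcoeffMX.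
apply/eqP; rewrite mcoeff_eq0 (perm_mem (msuppMX q m)).
by apply/mapP => -[m' _ def_c]; rewrite def_c lem_addr in nle_mc.
Qed.

Lemma mcoeff_sumX k (Q : pred 'X_{1..n}) (F : 'X_{1..n} -> R) c :
  (forall b, Q b -> (mdeg b < k)%N) ->
  (\sum_(b : 'X_{1..n < k} | Q b) F b *: 'X_[b])@_c = if Q c then F c else 0.
Proof.
move=> Q_deg; rewrite raddf_sum /=.
under eq_bigr => b _ do rewrite mcoeffZ mcoeffX.
case: ifP => Qc; last first.
  rewrite big1 // => b Qb; case: eqP => [bc|]; last by rewrite mulr0.
  by rewrite -bc Qb in Qc.
rewrite (bigD1 (BMultinom (Q_deg c Qc))) //= eqxx mulr1 big1 ?addr0 // => b.
case/andP=> _ ne_b; case: eqP => [bc|]; last by rewrite mulr0.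
by case/eqP: ne_b; apply: val_inj.
Qed.

Lemma mdeg_subm m c : (m <= c)%MM -> mdeg (c - m) = (mdeg c - mdeg m)%N.
Proof. by move=> le_mc; rewrite -{2}(submK le_mc) mdegD addnK. Qed.

Lemma mnm_le_mdeg c i : (c i <= mdeg c)%N.
Proof. by rewrite mdegE (bigD1 i) //= leq_addr. Qed.

Lemma lemUn c i k : (U_(i) *+ k <= c)%MM = (k <= c i)%N.
Proof.
apply/mnm_lepP/idP => [/(_ i)|le_kc j]; first by rewrite mulmnE mnm1E eqxx mul1n.
by rewrite mulmnE mnm1E; case: eqP => [<-|]; rewrite ?mul1n ?mul0n.
Qed.

Lemma mcoeffMXn q i k c :
  (q * 'X_i ^+ k)@_c = if (k <= c i)%N then q@_(c - U_(i) *+ k) else 0.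
Proof. by rewrite mpolyXn mcoeffMXE lemUn. Qed.

End MonomialCoefficients.

Section Derivations.
Variables (R : comNzRingType) (n : nat).
Implicit Types (f : 'I_n -> {mpoly R[n]}) (p q : {mpoly R[n]}).

Definition mder f p : {mpoly R[n]} := \sum_(i < n) f i * p^`M(i).

Lemma mder_is_linear f : linear (mder f).
Proof.
move=> c p q; rewrite /mder scaler_sumr -big_split; apply: eq_bigr => i _ /=.
by rewrite mderivD mderivZ mulrDr scalerAr.
Qed.

HB.instance Definition _ f :=
  GRing.isLinear.Build R {mpoly R[n]} {mpoly R[n]} _ (mder f) (mder_is_linear f).

Lemma mderM f p q : mder f (p * q) = mder f p * q + p * mder f q.
Proof.
rewrite /mder mulr_suml mulr_sumr -big_split; apply: eq_bigr => i _ /=.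
by rewrite mderivM; ring.
Qed.

Lemma mderX f i : mder f 'X_i = f i.
Proof.
rewrite /mder (bigD1 i) //= big1 => [|j ne_ji]; last first.
  by rewrite mderivX mnm1E eq_sym (negbTE ne_ji) scale0r mulr0.
rewrite mderivX mnm1E eqxx.
have := addmK U_(i) 0%MM; rewrite add0m => ->.
by rewrite mpolyX0 scale1r mulr1 addr0.
Qed.

Lemma mder_nat f k : mder f k%:R = 0.
Proof.
rewrite /mder big1 // => i _.
by rewrite mderivMn -mpolyC1 mderivC mul0rn mulr0.
Qed.

Lemma mder1 f : mder f 1 = 0.
Proof. exact: (mder_nat f 1). Qed.

Lemma eq_mder f g : f =1 g -> mder f =1 mder g.
Proof. by move=> fg p; apply: eq_bigr => i _; rewrite fg. Qed.

Lemma mder_sumr (I : Type) (r : seq I) (P : pred I) (g : 'I_n -> I -> {mpoly R[n]})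
    (c : I -> {mpoly R[n]}) p :
  mder (fun i => \sum_(j <- r | P j) g i j * c j) p =
  \sum_(j <- r | P j) mder (g^~ j) p * c j.
Proof.
rewrite /mder; under eq_bigr => i _ do rewrite mulr_suml.
rewrite exchange_big /=; apply: eq_bigr => j _.
by rewrite mulr_suml; apply: eq_bigr => i _; rewrite mulrAC.
Qed.

Lemma msymX1 (s : 'S_n) i : msym s 'X_i = 'X_(s i) :> {mpoly R[n]}.
Proof.
rewrite msymX; congr 'X_[_]; apply/mnmP => j; rewrite !mnmE.
by congr (nat_of_bool _); apply/eqP/eqP => [->|<-]; rewrite ?permKV ?permK.
Qed.

Lemma mder_msym f (s : 'S_n) : (forall i, msym s (f i) = f (s i)) ->
  forall p, msym s (mder f p) = mder f (msym s p).
Proof.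
move=> f_s; elim/mpoly_mulX_ind => [p q IHp IHq|c p IHp||p i IHp].
- by rewrite !raddfD /= IHp IHq.
- by rewrite linearZ !msymZ linearZ /= IHp.
- by rewrite msym1 mder1 msym0.
- by rewrite mderM msymD !msymM msymX1 mderM mderX IHp f_s mderX.
Qed.

Lemma mder_symmetric f : (forall (s : 'S_n) i, msym s (f i) = f (s i)) ->
  forall p, p \is symmetric -> mder f p \is symmetric.
Proof.
move=> f_s p /issymP p_sym; apply/issymP => s.
by rewrite mder_msym ?p_sym.
Qed.

End Derivations.

Section SymmetricFunctionsOfVariables.
Variables (R : comNzRingType) (n : nat).
Implicit Types (s : seq 'I_n) (A : {set 'I_n}) (c : 'X_{1..n}).

Definition mesym_seq k s : {mpoly R[n]} := (\prod_(l <- s) (1 + ('X_l)%:P * 'X))`_k.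

Lemma mesym_seq_nil k : mesym_seq k [::] = (k == 0%N)%:R.
Proof. by rewrite /mesym_seq big_nil coef1. Qed.

Lemma mesym_seq_cons k l s : mesym_seq k (l :: s) =
  mesym_seq k s + (if k is k'.+1 then 'X_l * mesym_seq k' s else 0).
Proof.
rewrite /mesym_seq big_cons mulrDl mul1r coefD -mulrA coefCM coefXM.
by case: k => [|k]; rewrite ?mulr0.
Qed.

Lemma perm_mesym_seq k s1 s2 : perm_eq s1 s2 -> mesym_seq k s1 = mesym_seq k s2.
Proof. by move=> eq_s; rewrite /mesym_seq (perm_big _ eq_s). Qed.

Lemma mesym_seq_small k s : (size s < k)%N -> mesym_seq k s = 0.
Proof.
elim: s k => [|l s IHs] [|k] //= lt_sk; first by rewrite mesym_seq_nil.
by rewrite mesym_seq_cons !IHs ?mulr0 ?addr0 // ltnW.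
Qed.

Lemma msym_mesym_seq (g : 'S_n) k s : msym g (mesym_seq k s) = mesym_seq k (map g s).
Proof.
elim: s k => [|l s IHs] k /=; first by rewrite !mesym_seq_nil rmorph_nat.
rewrite !mesym_seq_cons msymD IHs; case: k => [|k]; rewrite ?msym0 //.
by rewrite msymM msymX1 IHs.
Qed.

Definition mnm_on A c := [forall x, (x \notin A) ==> (c x == 0%N)].

Definition hcomp_on j A : {mpoly R[n]} :=
  \sum_(b : 'X_{1..n < j.+1} | (mdeg b == j) && mnm_on A b) 'X_[b].

Lemma mcoeff_hcomp_on j A c : (hcomp_on j A)@_c = ((mdeg c == j) && mnm_on A c)%:R.
Proof.
rewrite /hcomp_on (eq_bigr (fun b : 'X_{1..n < j.+1} => 1 *: 'X_[b])) => [|b _].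
  rewrite (@mcoeff_sumX _ _ j.+1 (fun b => (mdeg b == j) && mnm_on A b) (fun _ => 1)).
    by case: ifP.
  by move=> b /andP[/eqP -> _].
by rewrite scale1r.
Qed.

Lemma hcomp_on0 A : hcomp_on 0 A = 1.
Proof.
apply/mpolyP => c; rewrite mcoeff_hcomp_on mcoeff1 mdeg_eq0.
case: eqP => [->|] //=; suff -> : mnm_on A 0%MM by [].
by apply/forallP => x; rewrite mnm0E eqxx implybT.
Qed.

Lemma hcomp_on_set1 j i : hcomp_on j [set i] = 'X_i ^+ j.
Proof.
apply/mpolyP => c; rewrite mcoeff_hcomp_on mcoeffXn; congr (nat_of_bool _)%:R.
apply/andP/eqP => [[/eqP deg_c /forallP c_on]|<-].
  have c0 x : x != i -> c x = 0%N.
    by move=> ne_xi; move: (c_on x); rewrite inE ne_xi => /eqP.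
  apply/mnmP => x; rewrite mulmnE mnm1E; case: (eqVneq i x) => [<-|ne_ix].
    by rewrite mul1n -deg_c mdegE (bigD1 i) //= big1 ?addn0 // => y; apply: c0.
  by rewrite mul0n c0 // eq_sym.
split; first by rewrite mdegMn mdeg1 mul1n.
by apply/forallP => x; rewrite inE mulmnE mnm1E eq_sym; case: eqP.
Qed.

Lemma hcomp_onU1 j A l : l \notin A ->
  hcomp_on j.+1 (l |: A) = hcomp_on j.+1 A + 'X_l * hcomp_on j (l |: A).
Proof.
move=> lA; apply/mpolyP => c.
rewrite mcoeffD mulrC -[_ * 'X_l]/(_ * 'X_l ^+ 1) mcoeffMXn mulm1n !mcoeff_hcomp_on.
have [c_l0|c_l_gt0] := posnP (c l); rewrite ?c_l0 /=.
  rewrite addr0; congr (_ && _)%:R; apply/forallP/forallP => c_on x; move: (c_on x);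
    by rewrite !inE; case: (eqVneq x l) => [->|] //=; rewrite c_l0 eqxx implybT.
have -> : mnm_on A c = false.
  by apply/negbTE/negP => /forallP/(_ l); rewrite lA /= eqn0Ngt c_l_gt0.
rewrite andbF add0r mdeg_subm ?mdeg1; last by rewrite -(mulm1n U_(l)) lemUn.
have -> : (mdeg c - 1 == j)%N = (mdeg c == j.+1)%N.
  by move: (mnm_le_mdeg c l) => ?; apply/eqP/eqP; lia.
congr (_ && _)%:R; apply/forallP/forallP => c_on x; move: (c_on x);
  by rewrite !inE mnmBE mnm1E; case: (eqVneq x l) => [->|] //=; rewrite subn0.
Qed.

End SymmetricFunctionsOfVariables.

Arguments mesym_seq {R n}.
Arguments hcomp_on {R n}.

Lemma perm_map_enum_setC1 (T : finType) (s : {perm T}) x :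
  perm_eq (map s (enum [set~ x])) (enum [set~ s x]).
Proof.
apply: uniq_perm; rewrite ?map_inj_uniq ?enum_uniq //; first exact: perm_inj.
move=> y; rewrite mem_enum !inE; apply/mapP/idP => [[z]|ne_y_sx].
  by rewrite mem_enum !inE => ne_zx ->; rewrite (inj_eq (@perm_inj _ s)).
by exists ((s^-1)%g y); rewrite ?permKV // mem_enum !inE -(inj_eq (@perm_inj _ s)) permKV.
Qed.

(* the coefficient of t^y in (t + t^2)^x *)
Definition sq_coef x y : nat := if (x <= y)%N then 'C(x, y - x) else 0.

Lemma sq_coefS x y : sq_coef x.+1 y =
  ((if y is y'.+1 then sq_coef x y' else 0) +
   (if y is y'.+2 then sq_coef x y' else 0))%N.
Proof.
rewrite /sq_coef; case: y => [|[|y]] //=; first by rewrite addn0; case: x.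
rewrite !ltnS; have [le_xy|lt_yx] := leqP x y.
  by rewrite (leqW le_xy) subSS !subSn // binS.
case: (eqVneq x y.+1) => [->|ne_xy]; first by rewrite leqnn subSS !subnn.
by rewrite leqNgt ltn_neqAle eq_sym ne_xy lt_yx addn0.
Qed.

Lemma prod_sq_coef_addU n (a c : 'X_{1..n}) i :
  (\prod_(j < n) sq_coef ((a + U_(i))%MM j) (c j) =
   (if 1 <= c i then \prod_(j < n) sq_coef (a j) ((c - U_(i))%MM j) else 0) +
   (if 2 <= c i then \prod_(j < n) sq_coef (a j) ((c - U_(i) *+ 2)%MM j) else 0))%N.
Proof.
have prodD1 (F : 'I_n -> nat) : (\prod_j F j = F i * \prod_(j | j != i) F j)%N.
  by rewrite (bigD1 i).
rewrite !prodD1 !mnmBE !mnmDE ?mulmnE !mnm1E eqxx addn1 sq_coefS.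
set rest := (\prod_(j | j != i) sq_coef (a j) (c j))%N.
have rest_aU : (\prod_(j | j != i) sq_coef ((a + U_(i))%MM j) (c j) = rest)%N.
  by apply: eq_bigr => j ne_ji; rewrite mnmDE mnm1E eq_sym (negbTE ne_ji) addn0.
have rest_cU : (\prod_(j | j != i) sq_coef (a j) ((c - U_(i))%MM j) = rest)%N.
  by apply: eq_bigr => j ne_ji; rewrite mnmBE mnm1E eq_sym (negbTE ne_ji) subn0.
have rest_cU2 : (\prod_(j | j != i) sq_coef (a j) ((c - U_(i) *+ 2)%MM j) = rest)%N.
  apply: eq_bigr => j ne_ji.
  by rewrite mnmBE ?mulmnE mnm1E eq_sym (negbTE ne_ji) ?mul0n subn0.
rewrite rest_aU rest_cU rest_cU2 mulnDl; case: (c i) => [|[|y]] //=.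
by rewrite subn1 (_ : 1 + 1 = 2)%N // subn2.
Qed.

Section SteenrodSquares.
Variable d : nat.
Local Notation P := {mpoly 'F_2[d]}.
Implicit Types (p q : P) (a c : 'X_{1..d}).

Lemma pchar_mpoly_F2 : 2 \in [pchar P].
Proof. by apply: (rmorph_pchar (@mpolyC d 'F_2)); apply: pchar_Fp. Qed.

Lemma mcoeff_SqMon k a c : (SqMon d k a)@_c =
  ((mdeg c == mdeg a + k)%N * \prod_(j < d) sq_coef (a j) (c j))%:R.
Proof.
pose C b : 'F_2 := (\prod_(j < d) 'C(a j, b j))%:R.
have -> : SqMon d k a =
    'X_[a] * \sum_(b : 'X_{1..d < k.+1} | mdeg b == k) C b *: 'X_[b].
  by rewrite mulr_sumr; apply: eq_bigr => b _; rewrite mpolyXD scalerAr.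
rewrite -commr_mpolyX mcoeffMXE (@mcoeff_sumX _ _ k.+1 (fun b => mdeg b == k) C);
  last by move=> b /eqP ->.
have [le_ac|nle_ac] := boolP (a <= c)%MM; last first.
  have [j lt_ca] : exists j, (c j < a j)%N.
    apply/existsP; apply: contraR nle_ac; rewrite negb_exists => /forallP le_ac.
    by apply/mnm_lepP => j; rewrite leqNgt le_ac.
  by rewrite (bigD1 j) //= {1}/sq_coef leqNgt lt_ca muln0.
rewrite mdeg_subm // -(eqn_add2l (mdeg a)) subnKC; last first.
  by rewrite -(submK le_ac) mdegD leq_addl.
case: eqP => _; rewrite /C ?mul1n ?mul0n //; congr _%:R; apply: eq_bigr => j _.
by rewrite /sq_coef mnmBE (mnm_lepP le_ac).
Qed.

Lemma SqMon0 a : SqMon d 0 a = 'X_[a].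
Proof.
rewrite /SqMon (big_pred1 (@bm0 d 0)) => [|b]; last by rewrite /= mdeg_eq0 bmeqP.
by rewrite big1 ?scale1r ?addm0 // => j _; rewrite mnm0E bin0.
Qed.

Lemma SqMon_addU k a i : SqMon d k (a + U_(i)) =
  SqMon d k a * 'X_i + (if k is k'.+1 then SqMon d k' a * 'X_i ^+ 2 else 0).
Proof.
case: k => [|k]; first by rewrite !SqMon0 addr0 mpolyXD.
apply/mpolyP => c; have le_cD := mnm_le_mdeg c i.
have deg1 : (1 <= c i)%N ->
    (mdeg (c - U_(i)) == mdeg a + k.+1)%N = (mdeg c == mdeg a + 1 + k.+1)%N.
  move=> le1c; rewrite mdeg_subm ?mdeg1; last by rewrite -(mulm1n U_(i)) lemUn.
  by apply/eqP/eqP; lia.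
have deg2 : (2 <= c i)%N ->
    (mdeg (c - U_(i) *+ 2) == mdeg a + k)%N = (mdeg c == mdeg a + 1 + k.+1)%N.
  move=> le2c; rewrite mdeg_subm ?lemUn // mdegMn mdeg1.
  by apply/eqP/eqP; lia.
rewrite mcoeffD -[_ * 'X_i]/(_ * 'X_i ^+ 1) !mcoeffMXn mulm1n !mcoeff_SqMon.
rewrite prod_sq_coef_addU mdegD mdeg1.
case ci: (c i) deg1 deg2 => [|[|y]] /= deg1 deg2; first by rewrite muln0 addr0.
  by rewrite deg1 // addn0 addr0.
by rewrite deg1 // deg2 // mulnDr natrD.
Qed.

HB.instance Definition _ k := GRing.Linear.copy (Sq d k) (mlin (SqMon d k)).

Lemma SqX k a : Sq d k 'X_[a] = SqMon d k a.
Proof. exact: mlinX. Qed.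

Lemma Sq0_id p : Sq d 0 p = p.
Proof. by rewrite [RHS]mpolyE; apply: eq_bigr => a _; rewrite SqMon0. Qed.

Lemma Sq1 k : Sq d k 1 = (k == 0)%:R.
Proof.
rewrite -mpolyX0 SqX; case: k => [|k]; first by rewrite SqMon0.
rewrite /SqMon big1 // => b /eqP deg_b.
have [j b_j] : exists j, b j != 0%N.
  apply/existsP; apply: contraT; rewrite negb_exists => /forallP b0.
  suff : mdeg b = 0%N by rewrite deg_b.
  by rewrite mdegE big1 // => j _; apply/eqP; rewrite -[_ == _]negbK b0.
by rewrite (bigD1 j) //= mnm0E bin0n (negbTE b_j) scale0r.
Qed.

Definition SqB k j p := if (j <= k)%N then Sq d (k - j) p else 0.

Lemma SqB_is_linear k j : linear (SqB k j).
Proof. by move=> c p q; rewrite /SqB; case: ifP; rewrite ?linearP // scaler0 addr0. Qed.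

HB.instance Definition _ k j :=
  GRing.isLinear.Build 'F_2 P P _ (SqB k j) (SqB_is_linear k j).

Lemma SqB0 k p : SqB k 0 p = Sq d k p.
Proof. by rewrite /SqB subn0. Qed.

Lemma SqB_subn k j l p : (j <= k)%N -> SqB (k - j) l p = SqB k (j + l) p.
Proof. by move=> le_jk; rewrite /SqB leq_subRL // subnDA. Qed.

Lemma SqB1 k j : SqB k j 1 = (j == k)%:R.
Proof. by rewrite /SqB Sq1 subn_eq0 eqn_leq; case: leqP. Qed.

Lemma Sq_mulX k p i : Sq d k (p * 'X_i) = Sq d k p * 'X_i + SqB k 1 p * 'X_i ^+ 2.
Proof.
elim/mpolyind: p => [|c a p _ _ IHp]; first by rewrite mul0r !linear0 !mul0r addr0.
rewrite mulrDl -scalerAl -mpolyXD !linearP /= {}IHp !SqX SqMon_addU /SqB.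
case: k => [|k] /=; rewrite ?subn1 /= ?SqX scalerDr !mulrDl -!scalerAl.
  by rewrite !mul0r !scaler0 !addr0.
exact: addrACA.
Qed.

Lemma SqB_mulX k j p i :
  SqB k j (p * 'X_i) = SqB k j p * 'X_i + SqB k j.+1 p * 'X_i ^+ 2.
Proof.
have [le_jk|lt_kj] := leqP j k.
  by rewrite {1 2}/SqB le_jk Sq_mulX SqB_subn // addn1.
by rewrite /SqB leqNgt lt_kj (leqNgt j.+1) ltnW //= !mul0r addr0.
Qed.

Lemma SqB_mulXpow s k j p i :
  SqB k j (p * 'X_i ^+ (2 ^ s)) =
  SqB k j p * 'X_i ^+ (2 ^ s) + SqB k (j + 2 ^ s) p * 'X_i ^+ (2 ^ s.+1).
Proof.
elim: s j p => [|s IHs] j p; first by rewrite expn0 expr1 SqB_mulX addn1.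
have XS t : 'X_i ^+ (2 ^ t.+1) = 'X_i ^+ (2 ^ t) * 'X_i ^+ (2 ^ t) :> P.
  by rewrite expnS mul2n -addnn exprD.
rewrite !XS mulrA !IHs !XS -addnA addnn -mul2n -expnS -[RHS]addr0.
set Y := 'X_i ^+ (2 ^ s).
by rewrite -(addrr_pchar2 pchar_mpoly_F2 (SqB k (j + 2 ^ s) p * Y ^+ 3)); ring.
Qed.

Lemma mder_sqr f q : mder f (q ^+ 2) = 0.
Proof.
by rewrite expr2 mderM [mder f q * q]mulrC addrr_pchar2 //; apply: pchar_mpoly_F2.
Qed.

Lemma mderMsqr f p q : mder f (p * q ^+ 2) = mder f p * q ^+ 2.
Proof. by rewrite mderM mder_sqr mulr0 addr0. Qed.

Local Notation Qder n := (mder (fun i : 'I_d => 'X_i ^+ (2 ^ n.+1))).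

Lemma Sq1_Qder0 p : Sq d 1 p = Qder 0 p.
Proof.
elim/mpoly_mulX_ind: p => [p q IHp IHq|c p IHp||p i IHp].
- by rewrite !linearD /= IHp IHq.
- by rewrite !linearZ /= IHp.
- by rewrite Sq1 mder1.
- by rewrite Sq_mulX mderM mderX IHp /SqB /= Sq0_id expn1.
Qed.

Lemma Qder_SqB n k j p :
  Qder n (SqB k j p) + SqB k j (Qder n p) = Qder n.+1 (SqB k (j + 2 ^ n.+1) p).
Proof.
move: k j; elim/mpoly_mulX_ind: p => [p q IHp IHq|c p IHp||p i IHp] k j.
- by rewrite !linearD /= addrACA IHp IHq.
- by rewrite !linearZ /= -scalerDr IHp.
- by rewrite !SqB1 !mder_nat mder1 linear0 addr0.
rewrite !SqB_mulX !linearD /= !mderMsqr !mderM !mderX linearD /= SqB_mulX SqB_mulXpow.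
rewrite -addSn -!IHp -[RHS]addr0.
(* the two copies of SqB k j p * x_i^(2^(n+1)) cancel in characteristic 2 *)
by rewrite -(addrr_pchar2 pchar_mpoly_F2 (SqB k j p * 'X_i ^+ (2 ^ n.+1))); ring.
Qed.

Lemma Qm_Qder n p : Qm d n p = Qder n p.
Proof.
elim: n p => [|n IHn] p /=; first exact: Sq1_Qder0.
rewrite !IHn (oppr_pchar2 pchar_mpoly_F2) -!SqB0 Qder_SqB add0n.
by rewrite /SqB leqnn subnn Sq0_id.
Qed.

Lemma hcomp_on_setT j : hcomp_on j [set: 'I_d] = hcomp d j.
Proof.
apply: eq_bigl => b; rewrite andb_idr // => _.
by apply/forallP => x; rewrite inE.
Qed.

(* Mod 2, (1 - x_i t)^-1 = (sum_j h_j(x_i, x_s) t^j) * prod_(l in s) (1 + x_l t):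
   compare the coefficients of t^m. *)
Lemma expX_mesym_hcomp i m s : uniq s -> i \notin s ->
  'X_i ^+ m = \sum_(k < m.+1) mesym_seq k s * hcomp_on (m - k) (i |: [set x in s]) :> P.
Proof.
elim: s => [|l s IHs] /=.
  move=> _ _; rewrite big_ord_recl /= mesym_seq_nil mul1r subn0 big1 ?addr0.
    have -> : i |: [set x in [::]] = [set i] by apply/setP => x; rewrite !inE orbF.
    by rewrite hcomp_on_set1.
  by move=> k _; rewrite mesym_seq_nil mul0r.
move=> /andP[l_s s_uniq]; rewrite in_cons negb_or => /andP[ne_il i_s].
set A := i |: [set x in s]; set A' := l |: A.
have -> : i |: [set x in l :: s] = A' by apply/setP => x; rewrite !inE orbCA.
have lA : l \notin A by rewrite !inE negb_or eq_sym ne_il.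
pose up k : P := if k is k'.+1 then 'X_l * mesym_seq k' s else 0.
pose down k : P := if (k < m)%N then 'X_l * hcomp_on (m - k.+1) A' else 0.
have hA' (k : 'I_m.+1) : hcomp_on (m - k) A' = hcomp_on (m - k) A + down k.
  rewrite /down; case: ltnP => [lt_km|le_mk].
    have -> : (m - k = (m - k.+1).+1)%N by lia.
    by rewrite hcomp_onU1.
  have -> : (m - k = 0)%N by have := ltn_ord k; lia.
  by rewrite !hcomp_on0 addr0.
have shift : \sum_(k < m.+1) mesym_seq k s * down k =
    \sum_(k < m.+1) up k * hcomp_on (m - k) A'.
  rewrite big_ord_recr /= /down ltnn mulr0 addr0 [RHS]big_ord_recl /= mul0r add0r.
  by apply: eq_bigr => k _; rewrite /bump /= ltn_ord add1n mulrCA mulrA.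
rewrite (IHs s_uniq i_s).
under [RHS]eq_bigr => k _ do rewrite mesym_seq_cons -/(up k) mulrDl {1}hA' mulrDr -addrA.
(* the two sums exchanged by the index shift cancel in characteristic 2 *)
rewrite big_split /= big_split /= shift addrr_pchar2 ?addr0 //.
exact: pchar_mpoly_F2.
Qed.

Lemma expX_Gr_ideal i m : (d <= m)%N ->
  'X_i ^+ m =
  \sum_(j < m.+1 | (m - d < j)%N) mesym_seq (m - j) (enum [set~ i]) * hcomp d j.
Proof.
move=> le_dm; have i_C1 : i \notin enum [set~ i] by rewrite mem_enum !inE eqxx.
rewrite (expX_mesym_hcomp m (enum_uniq _) i_C1).
have -> : i |: [set x in enum [set~ i]] = [set: 'I_d].
  by apply/setP => x; rewrite !inE mem_enum !inE; case: eqP.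
rewrite [RHS](reindex_inj rev_ord_inj) /= [RHS]big_mkcond; apply: eq_bigr => k _.
have le_km : (k <= m)%N := ltn_ord k.
rewrite subSS hcomp_on_setT; case: ltnP => [lt_dk|le_kd].
  by rewrite subKn.
rewrite mesym_seq_small ?mul0r // -cardE cardsC1 card_ord.
by have := ltn_ord i; lia.
Qed.

End SteenrodSquares.

Theorem corollary1p6 (n d m : nat) :
  (d <= m)%N -> (m <= 2 ^ n.+1)%N ->
  forall p : {mpoly 'F_2[d]}, p \is symmetric -> in_Gr_ideal d m (Qm d n p).
Proof.
move=> le_dm le_m2n p p_sym.
pose g i j : {mpoly 'F_2[d]} :=
  'X_i ^+ (2 ^ n.+1 - m) * mesym_seq (m - j) (enum [set~ i]).
have Xpow i : 'X_i ^+ (2 ^ n.+1) = \sum_(j < m.+1 | (m - d < j)%N) g i j * hcomp d j.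
  rewrite -(subnK le_m2n) exprD (expX_Gr_ideal i le_dm) mulr_sumr.
  by apply: eq_bigr => j _; rewrite mulrA.
rewrite Qm_Qder (eq_mder Xpow) mder_sumr.
exists (fun j => mder (g^~ j) p); split=> // j.
apply: mder_symmetric p_sym => s i.
rewrite msymM rmorphXn /= msymX1 msym_mesym_seq.
by rewrite (perm_mesym_seq _ _ (perm_map_enum_setC1 s i)).
Qed.
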